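(* Let $M=(Q_M,\Sigma,\delta_M,s_M,F_M)$ be a complete DFA with $m\ge 2$ states and $N=(Q_N,\Sigma,\delta_N,s_N,F_N)$ a complete DFA with $n\ge 1$ states over the same alphabet, and suppose $k:=|F_M\setminus\{s_M\}|\ge 1$. Then there exists a complete DFA with at most $(2^{m-1}+2^{m-k-1})\cdot n-n+1$ states that accepts $L(M)^*\cup L(N)$.
   Context: A DFA is a 5-tuple $(Q,\Sigma,\delta,s,F)$ with finite state set $Q$, finite alphabet $\Sigma$, transition function $\delta:Q\times\Sigma\to Q$ (total, i.e. the DFA is complete), initial state $s$ and final states $F\subseteq Q$; $L(M)$ is the language it accepts. For a language $L$, $L^*$ denotes its Kleene star. *)

From mathcomp Require Import all_boot.
Set Implicit Arguments. Unset Strict Implicit. Unset Printing Implicit Defensive.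

Record dfa (Sigma : finType) := DFA {
  state : finType;
  delta : state -> Sigma -> state;
  start : state;
  final : {set state}
}.

Definition run (Sigma : finType) (D : dfa Sigma) (q : state D) (w : seq Sigma)
  : state D := foldl (@delta Sigma D) q w.

Definition lang (Sigma : finType) (D : dfa Sigma) : seq Sigma -> Prop :=
  fun w => run (start D) w \in final D.

Definition kstar (Sigma : finType) (L : seq Sigma -> Prop) : seq Sigma -> Prop :=
  fun w => exists ws : seq (seq Sigma), (forall u, u \in ws -> L u) /\ flatten ws = w.

From Stdlib Require Import Setoid.
From mathcomp Require Import all_boot.
Set Implicit Arguments. Unset Strict Implicit. Unset Printing Implicit Defensive.

(* A run of M from its start state that has just finished a word of L(M)^*
   may restart at s_M, so the reachable part of the subset construction for
   L(M)^* consists of nonempty sets S that contain s_M as soon as they meet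
   F_M.  Such a set either contains s_M (2^(m-1) choices) or is a nonempty
   subset of the complement of {s_M} u F_M (2^(m-k-1) - 1 choices).  Running
   it in parallel with N, plus one fresh initial state accepting the empty
   word, gives at most (2^(m-1) + 2^(m-k-1) - 1) n + 1 states. *)

Lemma run_rcons (Sigma : finType) (D : dfa Sigma) (q : state D) w a :
  run q (rcons w a) = delta (run q w) a.
Proof. exact: foldl_rcons. Qed.

Section KleeneStar.

Variables (Sigma : finType) (L : seq Sigma -> Prop).

Lemma kstar_nil : kstar L [::].
Proof. by exists [::]. Qed.

Lemma kstar_cat u v : kstar L u -> L v -> kstar L (u ++ v).
Proof.
move=> [ws [Lws <-]] Lv; exists (rcons ws v); split; last exact: flatten_rcons.
by move=> x; rewrite mem_rcons inE => /orP [/eqP -> | /Lws].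
Qed.

Lemma kstar_split_last w :
  kstar L w -> w <> [::] ->
  exists u v, [/\ w = u ++ v, kstar L u, L v & v <> [::]].
Proof.
move=> [ws [Lws <-]]; elim/last_ind: ws Lws => [//|ws x IH] Lws.
have Lws' : forall u, u \in ws -> L u.
  by move=> u u_ws; apply: Lws; rewrite mem_rcons inE u_ws orbT.
rewrite flatten_rcons; case: x Lws => [|a x] Lws; first by rewrite cats0; exact: IH.
move=> _; exists (flatten ws), (a :: x); split => //; first by exists ws.
by apply: Lws; rewrite mem_rcons inE eqxx.
Qed.

Lemma kstar_rcons w a :
  kstar L (rcons w a) <-> exists u v, [/\ w = u ++ v, kstar L u & L (rcons v a)].
Proof.
split=> [Lwa | [u [v [-> Lu Lva]]]]; last by rewrite rcons_cat; exact: kstar_cat.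
have wa_ne : rcons w a <> [::] by case: (w).
have [u [v [wa_uv Lu Lv]]] := kstar_split_last Lwa wa_ne.
case/lastP: v wa_uv Lv => [//|v b]; rewrite -rcons_cat => /rcons_inj [-> <-] Lvb _.
by exists u, v.
Qed.

End KleeneStar.

Section StarAutomaton.

Variables (Sigma : finType) (M : dfa Sigma).

Local Notation s := (start M).
Local Notation F := (final M).

Definition star_step (S : {set state M}) (a : Sigma) : {set state M} :=
  let T := [set delta x a | x in S] in
  if T :&: F != set0 then s |: T else T.

Definition star_states (w : seq Sigma) : {set state M} :=
  foldl star_step [set s] w.

Definition star_reach (w : seq Sigma) (x : state M) : Prop :=
  exists u v, [/\ w = u ++ v, kstar (lang M) u & run s v = x].

Lemma star_reach_nil x : star_reach [::] x <-> x = s.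
Proof.
split=> [[u [v [uv _ <-]]] | ->]; first by case: u v uv => [|? ?] [|? ?].
by exists [::], [::]; split => //; exact: kstar_nil.
Qed.

Lemma star_reach_rcons w a x :
  star_reach (rcons w a) x <->
  (exists2 y, star_reach w y & delta y a = x) \/
  (x = s /\ kstar (lang M) (rcons w a)).
Proof.
split=> [[u [v []]] | [[y [u [v [-> Lu <-]]] <-] | [-> Lwa]]].
- case/lastP: v => [|v b]; first by rewrite cats0 => <- Lwa <-; right.
  rewrite -rcons_cat => /rcons_inj [-> <-] Lu <-; left.
  by exists (run s v); [exists u, v | rewrite run_rcons].
- by exists u, (rcons v a); rewrite rcons_cat run_rcons.
- by exists (rcons w a), [::]; rewrite cats0.
Qed.

Lemma kstar_rcons_reach w a :
  kstar (lang M) (rcons w a) <-> exists2 y, star_reach w y & delta y a \in F.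
Proof.
split=> [/kstar_rcons [u [v [-> Lu Lva]]] | [y [u [v [-> Lu <-]]] Fy]].
  by exists (run s v); [exists u, v | rewrite /lang run_rcons in Lva].
by apply/kstar_rcons; exists u, v; rewrite /lang run_rcons.
Qed.

Lemma mem_star_states w x : x \in star_states w <-> star_reach w x.
Proof.
elim/last_ind: w x => [|w a IH] x; first by rewrite star_reach_nil inE; split=> /eqP.
have mem_image y : y \in [set delta z a | z in star_states w] <->
    exists2 z, star_reach w z & delta z a = y.
  split=> [/imsetP [z /IH z_w ->] | [z /IH z_w <-]]; last exact: imset_f.
  by exists z.
have meet_final : [set delta z a | z in star_states w] :&: F != set0 <->
    kstar (lang M) (rcons w a).
  rewrite kstar_rcons_reach; split=> [/set0Pn [y] | [z z_w Fz]].
    by rewrite inE => /andP [/mem_image [z z_w <-] Fz]; exists z.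
  by apply/set0Pn; exists (delta z a); rewrite inE Fz andbT; apply/mem_image; exists z.
rewrite /star_states foldl_rcons -/(star_states w) /star_step star_reach_rcons.
case: ifP => [/meet_final Lwa | /negbT nmeet].
  split=> [/setU1P [-> | /mem_image] | [/mem_image | [-> _]]]; try by [left | right].
    by move=> Tx; apply/setU1P; right.
  exact: setU11.
split=> [/mem_image | [/mem_image // | [_ /meet_final]]]; first by left.
by rewrite (negPf nmeet).
Qed.

Lemma kstar_star_states w :
  kstar (lang M) w <-> w = [::] \/ star_states w :&: F != set0.
Proof.
case/lastP: w => [|w a]; first by split=> [|_]; [left | exact: kstar_nil].
have meet_reach : star_states (rcons w a) :&: F != set0 <->
    exists2 x, star_reach (rcons w a) x & x \in F.
  split=> [/set0Pn [x] | [x /mem_star_states x_wa Fx]].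
    by rewrite inE => /andP [/mem_star_states x_wa Fx]; exists x.
  by apply/set0Pn; exists x; rewrite inE x_wa.
rewrite meet_reach; split=> [Lwa | [wa_nil | [x /star_reach_rcons x_wa Fx]]].
- right; have [y y_w Fya] := (kstar_rcons_reach w a).1 Lwa.
  by exists (delta y a) => //; apply/star_reach_rcons; left; exists y.
- by case: (w) wa_nil.
- case: x_wa => [[y y_w ya_x] | [_ //]].
  by apply/kstar_rcons_reach; exists y; rewrite ?ya_x.
Qed.

Definition star_state (S : {set state M}) : bool :=
  (S != set0) && ((S :&: F != set0) ==> (s \in S)).

Lemma star_step_state (S : {set state M}) a :
  S != set0 -> star_state (star_step S a).
Proof.
case/set0Pn=> x Sx; rewrite /star_state /star_step.
set T := [set delta y a | y in S].
have T_ne : T != set0 by apply/set0Pn; exists (delta x a); exact: imset_f.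
case: ifP => [_ | ->]; last by rewrite T_ne.
rewrite !inE eqxx implybT andbT.
by apply/set0Pn; exists s; rewrite !inE eqxx.
Qed.

Lemma card_star_state :
  #|[set S | star_state S]| <=
  2 ^ (#|state M| - 1) + (2 ^ (#|state M| - #|F :\ s| - 1) - 1).
Proof.
set A := powerset (~: (s |: F)).
have star_state_split :
    [set S | star_state S] \subset [set s |: X | X in powerset [set~ s]] :|: A :\ set0.
  apply/subsetP => S; rewrite !inE => /andP [S_ne S_ok]; case s_S: (s \in S).
    apply/orP; left; apply/imsetP; exists (S :\ s); last by rewrite setD1K.
    by rewrite powersetE; apply/subsetP => y; rewrite !inE => /andP [].
  apply/orP; right; rewrite S_ne /=; apply/subsetP => y Sy; rewrite !inE negb_or.
  move: S_ok; rewrite s_S implybF negbK => /eqP S_F.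
  apply/andP; split; first by apply: contraFneq s_S => <-.
  by apply: contraT; rewrite negbK => Fy; rewrite -(in_set0 y) -S_F inE Sy.
apply: leq_trans (subset_leq_card star_state_split) _.
apply: leq_trans (leq_card_setU _ _) _; apply: leq_add.
  by apply: leq_trans (leq_imset_card _ _) _; rewrite card_powerset cardsC1 subn1.
have card_sF : #|s |: F| = (#|F :\ s|).+1.
  by rewrite (cardsD1 s) setU11 setDUl setDv set0U.
have card_A : #|A| = (#|A :\ set0|).+1 by rewrite (cardsD1 set0) inE sub0set.
have card_compl : #|~: (s |: F)| = #|state M| - #|F :\ s| - 1.
  by rewrite cardsCs setCK card_sF subnS subn1.
by rewrite -card_compl -card_powerset -/A card_A subn1.
Qed.

End StarAutomaton.

Section StarUnionAutomaton.

Variables (Sigma : finType) (M N : dfa Sigma).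

Definition star_union_state : finType :=
  option {p : {set state M} * state N | star_state p.1}.

(* [None] is a fresh initial state: it must accept the empty word, and it
   behaves otherwise like the pair ([set s_M], s_N). *)
Definition star_union_pair (d : star_union_state) : {set state M} * state N :=
  if d is Some p then val p else ([set start M], start N).

Lemma star_union_pair_ne d : (star_union_pair d).1 != set0.
Proof.
case: d => [[p /andP [] //] |].
by apply/set0Pn; exists (start M); rewrite inE.
Qed.

Definition star_union_delta (d : star_union_state) (a : Sigma) : star_union_state :=
  Some (exist _ (star_step (star_union_pair d).1 a, delta (star_union_pair d).2 a)
    (star_step_state a (star_union_pair_ne d))).

Definition star_union_final : {set star_union_state} :=
  [set d | (d == None) || ((star_union_pair d).1 :&: final M != set0)
                       || ((star_union_pair d).2 \in final N)].

Definition star_union_dfa : dfa Sigma :=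
  DFA star_union_delta None star_union_final.

Lemma star_union_pair_run w :
  star_union_pair (run (start star_union_dfa) w) = (star_states M w, run (start N) w).
Proof.
elim/last_ind: w => [|w a IH] //.
by rewrite !run_rcons /= IH /star_states foldl_rcons.
Qed.

Lemma lang_star_union w :
  lang star_union_dfa w <-> kstar (lang M) w \/ lang N w.
Proof.
rewrite kstar_star_states /lang inE star_union_pair_run /=.
case/lastP: w => [|w a]; first by split=> // _; left; left.
rewrite run_rcons /=; split=> [/orP [meet | Nwa] | [[wa_nil | meet] | Nwa]].
- by left; right.
- by right.
- by case: (w) wa_nil.
- by rewrite meet.
- by rewrite Nwa orbT.
Qed.

Lemma card_star_union :
  #|star_union_state| <=
  (2 ^ (#|state M| - 1) + (2 ^ (#|state M| - #|final M :\ start M| - 1) - 1))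
    * #|state N| + 1.
Proof.
rewrite card_option card_sig addn1 ltnS.
have sub : [pred p : {set state M} * state N | star_state p.1] \subset
    setX [set S | star_state S] [set: state N].
  by apply/subsetP => p; rewrite !inE andbT.
apply: leq_trans (subset_leq_card sub) _; rewrite cardsX cardsT leq_mul2r.
by rewrite card_star_state orbT.
Qed.

End StarUnionAutomaton.

Theorem theorem1 (Sigma : finType) (M N : dfa Sigma) :
  let m := #|state M| in
  let n := #|state N| in
  let k := #|final M :\ start M| in
  2 <= m -> 1 <= n -> 1 <= k ->
  exists D : dfa Sigma,
    #|state D| <= (2 ^ (m - 1) + 2 ^ (m - k - 1)) * n - n + 1 /\
    forall w : seq Sigma, lang D w <-> (kstar (lang M) w \/ lang N w).
Proof.
move=> m n k _ _ _; exists (star_union_dfa M N).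
split; last exact: lang_star_union.
apply: leq_trans (card_star_union M N) _; rewrite leq_add2r.
have pow_gt0 : 0 < 2 ^ (m - k - 1) by rewrite expn_gt0.
by rewrite addnBA // mulnBl mul1n.
Qed.
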